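(* Let $A\in\mathbb R^{n\times n}$ be symmetric ($n\ge3$) and let $z\in\mathbb C\setminus\mathbb R$ with $|z|\le10$. Suppose $$\|R_{A,12}(z)-m_0(z)\mathbf I_2\|\le\delta,$$ where $0\le\delta\le\frac12\inf\{|m_0(w)|:w\in\mathbb C\setminus[-2,2],\,|w|\le10\}$. Then there is an absolute constant $C>0$ such that for $k=1,2$, $$\Big|\mathbf e_k^\top R_A(z)\mathbf 1-m_0(z)\big(1-a_k^\top R_A^{(12)}(z)\mathbf 1_{n-2}\big)\Big|\le C\delta\big(1+\|R_A(z)\mathbf 1\|_\infty\big).$$
   Context: $R_A(z)=(A-z\mathbf I)^{-1}$; $R_{A,12}(z)\in\mathbb C^{2\times2}$ is the upper-left $2\times2$ submatrix of $R_A(z)$; $R_A^{(12)}(z)\in\mathbb C^{(n-2)\times(n-2)}$ is the resolvent of the $(n-2)\times(n-2)$ submatrix of $A$ obtained by deleting its first two rows and columns; $a_k^\top\in\mathbb R^{1\times(n-2)}$ is the $k$-th row of $A$ with its first two entries removed; $\mathbf 1,\mathbf 1_{n-2}$ are all-ones vectors; $\|v\|_\infty=\max_i|v_i|$ and $\|\cdot\|$ is the spectral norm. $m_0(z)=\frac{-z+\sqrt{z^2-4}}2$ is the Stieltjes transform of the semicircle law, defined for $z\notin[-2,2]$ with branch cut on $[-2,2]$ and $\sqrt{z^2-4}\sim z$ as $|z|\to\infty$. *)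

From HB Require Import structures.
From mathcomp Require Import all_boot all_order all_algebra.
From mathcomp Require Import complex.
From mathcomp Require Import all_classical all_reals.
Set Implicit Arguments. Unset Strict Implicit. Unset Printing Implicit Defensive.
Import Order.TTheory GRing.Theory Num.Theory.
Local Open Scope ring_scope.
Local Open Scope classical_set_scope.

Section Defs.
Variable R : realType.
Local Notation C := R[i].

Definition cabs (x : C) : R := Normc.normc x.

Definition vnorm2 (q : nat) (v : 'cV[C]_q) : R :=
  Num.sqrt (\sum_(i < q) (cabs (v i ord0)) ^+ 2).

Definition specnorm (p q : nat) (M : 'M[C]_(p, q)) : R :=
  sup [set r : R | exists v : 'cV[C]_q, vnorm2 v = 1 /\ r = vnorm2 (M *m v)].

Definition vnorminf (q : nat) (v : 'cV[C]_q) : R :=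
  \big[Num.max/0]_(i < q) cabs (v i ord0).

Definition resolvent (n : nat) (A : 'M[R]_n) (z : C) : 'M[C]_n :=
  invmx (map_mx (fun x : R => (x%:C)%C) A - z%:M).

(* principal square root (branch cut on the negative real axis) *)
Definition csqrt (x : C) : C := sqrtc x.

(* sqrt(z^2-4) with branch cut [-2,2] and sqrt(z^2-4) ~ z at infinity:
   sqrt(z-2) * sqrt(z+2) with principal square roots *)
Definition sqrt_z2m4 (z : C) : C := csqrt (z - 2%:R) * csqrt (z + 2%:R).

(* Stieltjes transform of the semicircle law *)
Definition m0 (z : C) : C := (- z + sqrt_z2m4 z) / 2%:R.

Definition in_seg22 (w : C) : Prop := complex.Im w = 0 /\ -2%:R <= complex.Re w <= 2%:R.

Definition m0_inf : R :=
  inf [set r : R | exists w : C, ~ in_seg22 w /\ cabs w <= 10%:R /\ r = cabs (m0 w)].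

Definition ones (q : nat) : 'cV[C]_q := const_mx 1.

End Defs.

From HB Require Import structures.
From mathcomp Require Import all_boot all_order all_algebra.
From mathcomp Require Import complex.
From mathcomp Require Import all_classical all_reals.
From mathcomp Require Import lra ring.
Set Implicit Arguments. Unset Strict Implicit. Unset Printing Implicit Defensive.
Import Order.TTheory GRing.Theory Num.Theory.
Local Open Scope ring_scope.

(* Write G = R_A(z), B for the upper-right 2 x (n-2) block of A and
   v = 1 - B R^(12)(z) 1.  Inverting A - z blockwise gives G_12 = - G_11 B R^(12),
   so the first two entries of G 1 form G_11 v, and the quantity to bound is
   the k-th entry of E v with E = G_11 - m0 I and ||E|| <= delta.  Since
   m0 v = G_11 v - E v, we get |m0| |v|_oo <= |G 1|_oo + sqrt 2 delta |v|_oo,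
   and delta <= |m0| / 2 absorbs the last term; finally |m0| >= 1/11 on
   |z| <= 10 because m0 (m0 + z) = -1.  A - z and its lower-right block are
   invertible because real symmetric matrices have real eigenvalues. *)

Section ScalarBlocks.
Variables (F : pzRingType) (p m : nat).
Implicit Types X : 'M[F]_(p + m).

Lemma ursubmx_sub_scalar X a : ursubmx (X - a%:M) = ursubmx X.
Proof.
rewrite -{1}[X]submxK scalar_mx_block opp_block_mx add_block_mx block_mxKur.
by rewrite oppr0 addr0.
Qed.

Lemma drsubmx_sub_scalar X a : drsubmx (X - a%:M) = drsubmx X - a%:M.
Proof.
by rewrite -{1}[X]submxK scalar_mx_block opp_block_mx add_block_mx block_mxKdr.
Qed.

End ScalarBlocks.

Section BlockInverse.
Variables (F : comUnitRingType) (p m : nat).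

Lemma invmx_ursubmx (M : 'M[F]_(p + m)) :
  M \in unitmx -> drsubmx M \in unitmx ->
  ursubmx (invmx M) = - (ulsubmx (invmx M) *m ursubmx M *m invmx (drsubmx M)).
Proof.
move=> Mu Du; have := congr1 ursubmx (mulVmx Mu); set G := invmx M.
rewrite -{1}[G]submxK -{1}[M]submxK mulmx_block block_mxKur.
rewrite scalar_mx_block block_mxKur => /eqP; rewrite addr_eq0 => /eqP GM.
by rewrite GM mulNmx mulmxK // opprK.
Qed.

Lemma usubmx_invmx_mul r (M : 'M[F]_(p + m)) (W1 : 'M_(p, r)) (W2 : 'M_(m, r)) :
  M \in unitmx -> drsubmx M \in unitmx ->
  usubmx (invmx M *m col_mx W1 W2)
  = ulsubmx (invmx M) *m (W1 - ursubmx M *m invmx (drsubmx M) *m W2).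
Proof.
move=> Mu Du; rewrite -mul_usub_mx -[usubmx _]hsubmxK mul_row_col.
by rewrite -/(ursubmx _) invmx_ursubmx // mulmxBr !mulmxA mulNmx.
Qed.

End BlockInverse.

Section VectorNorms.
Variable R : realType.
Local Notation C := R[i].
Implicit Types (x y : C).

Lemma cabs_ge0 x : 0 <= cabs x. Proof. by case: x => a b; exact: sqrtr_ge0. Qed.
Lemma cabs0 : cabs (0 : C) = 0. Proof. exact: Normc.normc0. Qed.
Lemma cabs1 : cabs (1 : C) = 1. Proof. exact: Normc.normc1. Qed.
Lemma cabs_eq0 x : cabs x = 0 -> x = 0. Proof. exact: Normc.eq0_normc. Qed.
Lemma cabsM x y : cabs (x * y) = cabs x * cabs y. Proof. exact: Normc.normcM. Qed.
Lemma cabsN x : cabs (- x) = cabs x. Proof. exact: normcN. Qed.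
Lemma cabsD x y : cabs (x + y) <= cabs x + cabs y. Proof. exact: le_normcD. Qed.
Lemma cabsB x y : cabs (x - y) <= cabs x + cabs y.
Proof. by rewrite -(cabsN y) cabsD. Qed.
Lemma cabs_real (r : R) : cabs (r%:C)%C = `|r|.
Proof. by rewrite /cabs /= expr0n addr0 sqrtr_sqr. Qed.

Lemma cabs_sum_le (I : finType) (F : I -> C) :
  cabs (\sum_i F i) <= \sum_i cabs (F i).
Proof.
elim/big_ind2: _ => [|x1 r1 x2 r2 h1 h2|//]; first by rewrite cabs0.
exact: le_trans (cabsD _ _) (lerD h1 h2).
Qed.

Variable q : nat.
Implicit Types (v : 'cV[C]_q).

Lemma vnorm2_ge0 v : 0 <= vnorm2 v. Proof. exact: sqrtr_ge0. Qed.

Lemma cabs_le_vnorm2 v i : cabs (v i 0) <= vnorm2 v.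
Proof.
rewrite /vnorm2 -(ger0_norm (cabs_ge0 (v i 0))) -sqrtr_sqr ler_sqrt.
  by rewrite (bigD1 i) //= lerDl sumr_ge0 // => j _; rewrite sqr_ge0.
by rewrite sumr_ge0 // => j _; rewrite sqr_ge0.
Qed.

Lemma vnorm2_eq0 v : vnorm2 v = 0 -> v = 0.
Proof.
move=> v0; apply/matrixP => i j; rewrite ord1 mxE; apply: cabs_eq0.
by apply/eqP; rewrite eq_le cabs_ge0 -v0 cabs_le_vnorm2.
Qed.

Lemma vnorm2Z c v : vnorm2 (c *: v) = cabs c * vnorm2 v.
Proof.
rewrite /vnorm2; under eq_bigr do rewrite mxE cabsM exprMn.
by rewrite -mulr_sumr sqrtrM ?sqr_ge0 // sqrtr_sqr ger0_norm ?cabs_ge0.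
Qed.

Lemma vnorminf_ge0 v : 0 <= vnorminf v.
Proof.
by rewrite /vnorminf; elim/big_ind: _ => // [a b a0 _|i _]; rewrite ?le_max ?a0 ?cabs_ge0.
Qed.

Lemma le_vnorminf v i : cabs (v i 0) <= vnorminf v.
Proof. by rewrite /vnorminf (bigD1 i) //= le_max lexx. Qed.

Lemma vnorminf_le v M :
  0 <= M -> (forall i, cabs (v i 0) <= M) -> vnorminf v <= M.
Proof.
move=> M0 vM; rewrite /vnorminf; elim/big_ind: _ => // a b aM bM.
by rewrite ge_max aM bM.
Qed.

Lemma vnorm2_le_vnorminf v : vnorm2 v <= Num.sqrt q%:R * vnorminf v.
Proof.
have M0 := vnorminf_ge0 v.
rewrite -[vnorminf v]ger0_norm // -sqrtr_sqr -sqrtrM // ler_sqrt; last first.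
  by rewrite mulr_ge0 ?sqr_ge0.
have : \sum_(i < q) cabs (v i 0) ^+ 2 <= \sum_(i < q) vnorminf v ^+ 2.
  by apply: ler_sum => i _; rewrite ler_pXn2r ?nnegrE ?cabs_ge0 ?le_vnorminf.
by rewrite sumr_const card_ord mulr_natl.
Qed.

End VectorNorms.

Lemma vnorminf_usubmx (R : realType) p m (w : 'cV[R[i]]_(p + m)) :
  vnorminf (usubmx w) <= vnorminf w.
Proof. by apply: vnorminf_le (vnorminf_ge0 _) _ => i; rewrite mxE le_vnorminf. Qed.

Section SpectralNorm.
Variables (R : realType) (p q : nat).
Variable E : 'M[R[i]]_(p, q).

Lemma specnorm_has_ubound :
  has_ubound [set r : R | exists v, vnorm2 v = 1 /\ r = vnorm2 (E *m v)]%classic.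
Proof.
exists (Num.sqrt p%:R * \sum_i \sum_j cabs (E i j)) => _ [v [v1 ->]].
have E0 : 0 <= \sum_i \sum_j cabs (E i j) by do 2!apply: sumr_ge0 => ? _; exact: cabs_ge0.
apply: le_trans (vnorm2_le_vnorminf _) _; rewrite ler_wpM2l ?sqrtr_ge0 //.
apply: vnorminf_le => // i; rewrite mxE; apply: le_trans (cabs_sum_le _) _.
apply: (@le_trans _ _ (\sum_j cabs (E i j))).
  apply: ler_sum => j _; rewrite cabsM ler_piMr ?cabs_ge0 //.
  by rewrite -v1 cabs_le_vnorm2.
rewrite (bigD1 i) //= lerDl sumr_ge0 // => k _.
by apply: sumr_ge0 => ? _; exact: cabs_ge0.
Qed.

Lemma specnorm_mulmx_le d u : specnorm E <= d -> vnorm2 (E *m u) <= d * vnorm2 u.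
Proof.
move=> Ed; have [u0|u_neq0] := eqVneq (vnorm2 u) 0.
  by rewrite u0 mulr0 (vnorm2_eq0 u0) mulmx0 -(scale0r 0) vnorm2Z cabs0 mul0r.
have u_gt0 : 0 < vnorm2 u by rewrite lt_def u_neq0 vnorm2_ge0.
pose c := ((vnorm2 u)^-1)%:C%C.
have cE : cabs c = (vnorm2 u)^-1 by rewrite cabs_real ger0_norm // invr_ge0 ltW.
have unit_cu : vnorm2 (c *: u) = 1 by rewrite vnorm2Z cE mulVf.
have : vnorm2 (E *m (c *: u)) <= d.
  by apply: le_trans Ed; apply: ub_le_sup; [exact: specnorm_has_ubound | exists (c *: u)].
by rewrite -scalemxAr vnorm2Z cE -ler_pdivlMl ?invr_gt0 // invrK mulrC.
Qed.

Lemma cabs_mulmx_le d v i : specnorm E <= d -> 0 <= d ->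
  cabs ((E *m v) i 0) <= d * Num.sqrt q%:R * vnorminf v.
Proof.
move=> Ed d0; apply: le_trans (cabs_le_vnorm2 _ i) _.
apply: le_trans (specnorm_mulmx_le _ Ed) _.
by rewrite -mulrA ler_wpM2l // vnorm2_le_vnorminf.
Qed.

End SpectralNorm.

Lemma vnorminf_le_shift (R : realType) q (E : 'M[R[i]]_q) (c : R[i]) d v :
  specnorm E <= d -> 0 <= d ->
  cabs c * vnorminf v <= vnorminf ((E + c%:M) *m v) + d * Num.sqrt q%:R * vnorminf v.
Proof.
move=> Ed d0; set W := vnorminf ((E + c%:M) *m v); set M := d * _ * _.
have WM0 : 0 <= W + M by rewrite !addr_ge0 ?mulr_ge0 ?sqrtr_ge0 ?vnorminf_ge0.
have [->|c0] := eqVneq c 0; first by rewrite cabs0 mul0r.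
have c_gt0 : 0 < cabs c.
  by rewrite lt_def cabs_ge0 andbT; apply: contra c0 => /eqP/cabs_eq0 ->.
rewrite mulrC -ler_pdivlMr //; apply: vnorminf_le => [|i]; first exact: divr_ge0 (ltW _).
rewrite ler_pdivlMr // mulrC -cabsM.
have -> : c * v i 0 = ((E + c%:M) *m v) i 0 - (E *m v) i 0.
  by rewrite mulmxDl mul_scalar_mx !mxE addrAC subrr add0r.
by apply: le_trans (cabsB _ _) _; rewrite lerD ?le_vnorminf ?cabs_mulmx_le.
Qed.

Lemma cabs_mulmx_le_shift2 (R : realType) (E : 'M[R[i]]_2) (c : R[i]) d L v k :
  specnorm E <= d -> 0 <= d -> 2 * d <= cabs c -> 1 <= L * cabs c ->
  cabs ((E *m v) k 0) <= 6 * L * d * vnorminf ((E + c%:M) *m v).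
Proof.
move=> Ed d0 dc Lc; have := vnorminf_le_shift c v Ed d0; have := cabs_mulmx_le v k Ed d0.
have : Num.sqrt 2 <= 3 / 2 :> R.
  by have := sqr_sqrtr (ler0n R 2); have := sqrtr_ge0 (2 : R); nra.
set s := Num.sqrt _; set x := cabs _; set W := vnorminf ((E + c%:M) *m v).
set M := vnorminf v; set a := cabs c.
move=> s_le Ex aM; have M0 : 0 <= M := vnorminf_ge0 v; have a0 : 0 <= a := cabs_ge0 c.
have x0 : 0 <= x := cabs_ge0 _.
have dsM : d * s * M <= 3 / 2 * d * M.
  have : 0 <= (3 / 2 - s) * (d * M) by rewrite !mulr_ge0 ?subr_ge0.
  lra.
have {}aM : a * M <= 4 * W.
  have : (a - 2 * d) * M >= 0 by rewrite mulr_ge0 // subr_ge0.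
  lra.
have ax : a * x <= 6 * d * W.
  have : a * x <= a * (3 / 2 * d * M) by rewrite ler_wpM2l //; exact: le_trans dsM.
  have : d * (a * M) <= d * (4 * W) by rewrite ler_wpM2l.
  lra.
have L0 : 0 <= L by nra.
have : 0 <= x * (L * a - 1) by rewrite mulr_ge0 ?subr_ge0.
have : L * (a * x) <= L * (6 * d * W) by rewrite ler_wpM2l.
lra.
Qed.

Section SemicircleTransform.
Variable R : realType.
Local Notation C := R[i].

Lemma m0_quadratic (z : C) : m0 z * (m0 z + z) = -1.
Proof.
have s2 : sqrt_z2m4 z ^+ 2 = z ^+ 2 - 4.
  by rewrite /sqrt_z2m4 /csqrt exprMn !sqr_sqrtc; ring.
rewrite /m0; move: (sqrt_z2m4 z) s2 => s s2.
have -> : (- z + s) / 2%:R * ((- z + s) / 2%:R + z) = (s ^+ 2 - z ^+ 2) / 4.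
  by field; rewrite ?pnatr_eq0.
by rewrite s2; field.
Qed.

Lemma cabs_m0_ge (z : C) : 1 <= (1 + cabs z) * cabs (m0 z).
Proof.
have := congr1 (@cabs R) (m0_quadratic z); rewrite cabsM cabsN cabs1.
move: (cabsD (m0 z) z) (cabs_ge0 (m0 z)) (cabs_ge0 z).
set a := cabs (m0 z); set b := cabs (_ + _); set t := cabs z.
by have [a1|a1] := lerP a 1; nra.
Qed.

Lemma m0_inf_le (z : C) : ~ in_seg22 z -> cabs z <= 10%:R -> m0_inf R <= cabs (m0 z).
Proof.
move=> zseg z10; apply: ge_inf; last by exists z.
by exists 0 => _ [w [_ [_ ->]]]; exact: cabs_ge0.
Qed.

End SemicircleTransform.

Section Resolvent.
Variable R : realType.
Local Notation C := R[i].
Local Notation toC := (map_mx (fun x : R => (x%:C)%C)).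
Local Open Scope sesquilinear_scope.

Lemma realsym_eigenvalue_real n (A : 'M[R]_n) (z : C) (u : 'rV[C]_n) :
  A^T = A -> u != 0 -> u *m toC A = z *: u -> z \is Num.real.
Proof.
move=> symA u0 uA; apply/CrealP.
have AH : (toC A) ^t* = toC A.
  by apply/matrixP => i j; rewrite !mxE -[in RHS]symA mxE; exact: conjc_real.
have N0 : (u *m u ^t*) 0 0 != 0 by rewrite -dotmxE lt0r_neq0 ?dnorm_gt0.
(* u A u^* equals both conj z * |u|^2 and z * |u|^2. *)
apply: (mulIf N0); transitivity ((u *m toC A *m u ^t*) 0 0).
  by rewrite -mulmxA -AH -map_mxM -trmx_mul uA linearZ map_mxZ -scalemxAr [RHS]mxE.
by rewrite uA -scalemxAl mxE.
Qed.

Lemma realsym_sub_scalar_unitmx n (A : 'M[R]_n) (z : C) :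
  A^T = A -> complex.Im z != 0 -> toC A - z%:M \in unitmx.
Proof.
move=> symA; apply: contraR; rewrite -row_free_unit -kermx_eq0 => ker_neq0.
have /eigenvalueP [u uA u0] : eigenvalue (toC A) z by [].
move: (realsym_eigenvalue_real symA u0 uA).
by case: z {uA ker_neq0} => a b; rewrite complex_real.
Qed.

Lemma resolvent_usubmx_mul p m r (A : 'M[R]_(p + m)) (z : C) (W1 : 'M_(p, r)) W2 :
  A^T = A -> complex.Im z != 0 ->
  usubmx (resolvent A z *m col_mx W1 W2)
  = ulsubmx (resolvent A z) *m (W1 - toC (ursubmx A) *m resolvent (drsubmx A) z *m W2).
Proof.
move=> symA Imz; have symD : (drsubmx A)^T = drsubmx A by rewrite trmx_drsub symA.
have := usubmx_invmx_mul W1 W2 (realsym_sub_scalar_unitmx symA Imz).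
rewrite drsubmx_sub_scalar -map_drsubmx realsym_sub_scalar_unitmx // => /(_ isT) ->.
by rewrite ursubmx_sub_scalar -map_ursubmx.
Qed.

End Resolvent.

Theorem lemma5p2 (R : realType) :
  exists Cst : R, 0 < Cst /\
  forall (m : nat) (A : 'M[R]_(2 + m)) (z : R[i]) (delta : R),
    (1 <= m)%N ->
    A^T = A ->
    complex.Im z != 0 ->
    cabs z <= 10%:R ->
    0 <= delta ->
    delta <= m0_inf R / 2%:R ->
    specnorm (ulsubmx (resolvent A z) - (m0 z)%:M) <= delta ->
    forall k : 'I_2,
      cabs ((resolvent A z *m ones R (2 + m)) (lshift m k) ord0
            - m0 z * (1 - (map_mx (fun x : R => (x%:C)%C) (row k (ursubmx A))
                             *m resolvent (drsubmx A) z *m ones R m) ord0 ord0))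
      <= Cst * delta * (1 + vnorminf (resolvent A z *m ones R (2 + m))).
Proof.
exists (6 * 11); split=> [|m A z delta _ symA Imz z10 delta0 delta_inf E_le k].
  by rewrite mulr_gt0.
set G := resolvent A z; set Rd := resolvent (drsubmx A) z.
set B := map_mx (fun x : R => (x%:C)%C) (ursubmx A).
set v := ones R 2 - B *m Rd *m ones R m.
have Gtop : usubmx (G *m ones R (2 + m)) = ulsubmx G *m v.
  by rewrite /ones -col_mx_const resolvent_usubmx_mul.
have -> : (G *m ones R (2 + m)) (lshift m k) 0 = (ulsubmx G *m v) k 0.
  by rewrite -Gtop [RHS]mxE.
rewrite map_row -!row_mul [row _ _ _ _]mxE -/B.
have -> : 1 - (B *m Rd *m ones R m) k 0 = v k 0 by rewrite !mxE.
have -> : (ulsubmx G *m v) k 0 - m0 z * v k 0 = ((ulsubmx G - (m0 z)%:M) *m v) k 0.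
  by rewrite mulmxBl mul_scalar_mx !mxE.
have m0_ge : 1 <= 11 * cabs (m0 z).
  by have := cabs_m0_ge z; have := cabs_ge0 (m0 z); nra.
have delta_m0 : 2 * delta <= cabs (m0 z).
  have : m0_inf R <= cabs (m0 z).
    by apply: m0_inf_le z10 => -[Im0 _]; rewrite Im0 eqxx in Imz.
  lra.
have := cabs_mulmx_le_shift2 v k E_le delta0 delta_m0 m0_ge.
rewrite subrK -/G -Gtop => /le_trans; apply.
by rewrite ler_wpM2l ?mulr_ge0 // (le_trans (vnorminf_usubmx _)) // lerDr.
Qed.
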